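(* For $s\ge3$, we have $\mathrm{ex}(n,P^{(3)}_s)=f(n,s-2)$.
   Context: An ordered $3$-uniform hypergraph is a $3$-uniform hypergraph with linearly ordered vertex set; $G$ contains $H$ if there is an order-preserving injection $f:V(H)\to V(G)$ with $f(e)\in E(G)$ for all $e\in E(H)$. $\mathrm{ex}(n,H)$ is the maximum number of edges of an $n$-vertex ordered $3$-uniform hypergraph not containing $H$. $P^{(3)}_s$ has vertices $v_1<\dots<v_s$ and edges $\{v_j,v_{j+1},v_{j+2}\}$ for $1\le j\le s-2$. Let $K^{(2)}_n$ be the complete graph on $[n]$ with the natural order. A $k$-edge-labeling $\phi$ of $K^{(2)}_n$ assigns to each pair $uv$ a label from a fixed linearly ordered set of size $k$. A triple $u<v<w$ is good (for $\phi$) if $\phi(uv)<\phi(vw)$, and bad otherwise. $f(n,k)$ is the maximum, over all $k$-edge-labelings of $K^{(2)}_n$, of the number of good triples. *)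

From mathcomp Require Import all_boot.
Set Implicit Arguments. Unset Strict Implicit. Unset Printing Implicit Defensive.

Definition uniform3 (n : nat) (G : {set {set 'I_n}}) : bool :=
  [forall e in G, #|e| == 3].

(* G contains P^(3)_s: there is an order-preserving injection
   f : 'I_s -> 'I_n (strictly increasing) mapping each consecutive triple
   {v_j, v_{j+1}, v_{j+2}} to an edge of G. *)
Definition contains_tight_path (n s : nat) (G : {set {set 'I_n}}) : bool :=
  [exists f : {ffun 'I_s -> 'I_n},
     [forall i : 'I_s, forall j : 'I_s, (i < j) ==> (f i < f j)] &&
     [forall i : 'I_s, forall j : 'I_s, forall k : 'I_s,
        ((val j == (val i).+1) && (val k == (val i).+2)) ==>
        ([set f i; f j; f k] \in G)]].

Definition ex_path (n s : nat) : nat :=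
  \max_(G : {set {set 'I_n}} | uniform3 G && ~~ contains_tight_path s G) #|G|.

(* A k-edge-labeling of K_n: labels in 'I_k (linearly ordered, size k);
   phi (u, v) is the label of the pair uv for u < v (other values unused). *)
Definition good_triples (n k : nat) (phi : {ffun 'I_n * 'I_n -> 'I_k}) : nat :=
  #|[set t : 'I_n * 'I_n * 'I_n |
      [&& t.1.1 < t.1.2, t.1.2 < t.2 &
          (phi (t.1.1, t.1.2) < phi (t.1.2, t.2))%N]]|.

Definition f_lab (n k : nat) : nat :=
  \max_(phi : {ffun 'I_n * 'I_n -> 'I_k}) good_triples phi.

From mathcomp Require Import all_boot zify.
Set Implicit Arguments. Unset Strict Implicit. Unset Printing Implicit Defensive.

(* Along a tight path v_1 < ... < v_s of the hypergraph of good triples of a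
   labeling, the labels of the pairs v_j v_(j+1) strictly increase; s - 1 such
   labels cannot fit into s - 2 values, so that hypergraph is P_s-free.
   Conversely, label each pair u < v of a P_s-free hypergraph by the number of
   edges of a longest tight path ending with u, v.  These labels are at most
   s - 3, and for every edge u < v < w a longest path ending with u, v extends
   to one ending with v, w, so every edge is a good triple. *)

Section Triples.
Variable n : nat.
Implicit Types a b c x y z : 'I_n.

Lemma card_set3 a b c : a < b -> b < c -> #|[set a; b; c]| = 3.
Proof.
move=> ab bc; have ac := ltn_trans ab bc.
rewrite -setUA cardsU1 cards2 !inE.
by rewrite -!val_eqE /= !(ltn_eqF ab, ltn_eqF ac, ltn_eqF bc).
Qed.

Lemma set3_inj a b c x y z : a < b -> b < c -> x < y -> y < z ->
  [set a; b; c] = [set x; y; z] -> [/\ a = x, b = y & c = z].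
Proof.
have in3 t : t \in [set x; y; z] -> [\/ t = x :> nat, t = y :> nat | t = z :> nat].
  by rewrite !inE => /orP [/orP [] |] /eqP ->;
    [constructor 1 | constructor 2 | constructor 3].
move=> ab bc xy yz E.
have /in3 ha : a \in [set x; y; z] by rewrite -E !inE eqxx.
have /in3 hb : b \in [set x; y; z] by rewrite -E !inE eqxx orbT.
have /in3 hc : c \in [set x; y; z] by rewrite -E !inE eqxx orbT.
by split; apply: ord_inj; case: ha; case: hb; case: hc; lia.
Qed.

Lemma set3_sorted (e : {set 'I_n}) : #|e| = 3 ->
  exists a b c, [/\ a < b, b < c & e = [set a; b; c]].
Proof.
pose leI := fun x y : 'I_n => x <= y.
have leI_total : total leI by move=> x y; apply: leq_total.
move=> e3; have := size_sort leI (enum e); rewrite -cardE e3.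
have := sort_sorted leI_total (enum e); have := sort_uniq leI (enum e).
have := mem_sort leI (enum e).
case: (sort leI (enum e)) => [|a [|b [|c [|]]]] // mem_abc; rewrite enum_uniq /=.
rewrite !inE !andbT /= => /andP [/norP [ab _] bc] /andP [le_ab le_bc] _.
rewrite /leI in le_ab le_bc.
exists a, b, c; split; try by rewrite ltn_neqAle ?le_ab ?le_bc andbT.
by apply/setP => t; rewrite -mem_enum -mem_abc !inE orbA.
Qed.

End Triples.

Definition tight_path n (G : {set {set 'I_n}}) (m : nat) (g : nat -> 'I_n) : Prop :=
  (forall i, i <= m -> g i < g i.+1) /\
  (forall i, i < m -> [set g i; g i.+1; g i.+2] \in G).

Lemma tight_path_pair n (G : {set {set 'I_n}}) (u v : 'I_n) :
  u < v -> tight_path G 0 (fun i => if i == 0 then u else v).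
Proof. by move=> lt_uv; split=> [[]|]. Qed.

Lemma tight_path_rcons n (G : {set {set 'I_n}}) m g (v : 'I_n) :
  tight_path G m g -> g m.+1 < v -> [set g m; g m.+1; v] \in G ->
  tight_path G m.+1 (fun i => if i <= m.+1 then g i else v).
Proof.
case=> g_incr g_edges lt_v e_v; split=> i lt_i.
- rewrite lt_i; have [lt_im | ge_im] := ltnP i m.+1; first exact: g_incr.
  by have -> : i = m.+1 by lia.
- have [lt_im | ge_im] := ltnP i m.
  + by rewrite (ltnW lt_i) lt_i ltnS lt_im; apply: g_edges.
  + have -> : i = m by lia.
    by rewrite leqnn leqnSn ltnn.
Qed.

Lemma contains_tight_pathP n (G : {set {set 'I_n}}) m :
  contains_tight_path m.+2 G <-> exists g, tight_path G m g.
Proof.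
split.
- case/existsP => f /andP [/forallP f_incr /forallP f_edges].
  exists (fun i => f (inord i)); split => i lt_i.
  + move/forallP: (f_incr (inord i)) => /(_ (inord i.+1)) /implyP; apply.
    by rewrite !inordK; lia.
  + move/forallP: (f_edges (inord i)) => /(_ (inord i.+1)) /forallP /(_ (inord i.+2)).
    by move/implyP; apply; rewrite /= !inordK ?eqxx //; lia.
- case=> g [g_incr g_edges]; apply/existsP; exists [ffun i : 'I_m.+2 => g i].
  apply/andP; split.
  + apply/forallP => i; apply/forallP => j; apply/implyP => ij; rewrite !ffunE.
    apply: (@homo_ltn_in _ [pred k | k <= m.+1] g (fun x y : 'I_n => x < y)) => //.
    * by move=> ? ? ?; apply: ltn_trans.
    * by move=> a b _ /[!inE] b_le k /andP [_ kb]; rewrite inE; lia.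
    * by move=> k _ /[!inE] /= lt_k; apply: g_incr.
    * by rewrite inE -ltnS.
    * by rewrite inE -ltnS.
  + apply/forallP => i; apply/forallP => j; apply/forallP => k; apply/implyP.
    case/andP => /eqP /= j_eq /eqP /= k_eq; rewrite !ffunE j_eq k_eq; apply: g_edges.
    by have := ltn_ord k; lia.
Qed.

Section GoodTriples.
Variables (n k : nat) (phi : {ffun 'I_n * 'I_n -> 'I_k}).

Definition good_set : {set 'I_n * 'I_n * 'I_n} :=
  [set t : 'I_n * 'I_n * 'I_n |
     [&& t.1.1 < t.1.2, t.1.2 < t.2 & (phi (t.1.1, t.1.2) < phi (t.1.2, t.2))%N]].

Definition good_graph : {set {set 'I_n}} :=
  [set [set t.1.1; t.1.2; t.2] | t in good_set].

Lemma card_good_graph : #|good_graph| = good_triples phi.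
Proof.
rewrite card_in_imset // => -[[a b] c] [[x y] z] /[!inE] /= /and3P [ab bc _].
by case/and3P=> xy yz _ /(set3_inj ab bc xy yz) [-> -> ->].
Qed.

Lemma good_graph_uniform : uniform3 good_graph.
Proof.
apply/forall_inP => _ /imsetP [[[a b] c] /[!inE] /= /and3P [ab bc _] ->].
by rewrite card_set3.
Qed.

Lemma good_graph_edge (a b c : 'I_n) : a < b -> b < c ->
  [set a; b; c] \in good_graph -> phi (a, b) < phi (b, c).
Proof.
move=> ab bc /imsetP [[[x y] z] /[!inE] /= /and3P [xy yz lt_phi] E].
by case: (set3_inj ab bc xy yz E) => -> -> ->.
Qed.

Lemma good_graph_labels_increase m g : tight_path good_graph m g ->
  forall i, i <= m -> i <= phi (g i, g i.+1).
Proof.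
case=> g_incr g_edges; elim=> [//|i IH] lt_im.
apply: leq_trans (good_graph_edge (g_incr _ _) (g_incr _ _) (g_edges _ lt_im)); lia.
Qed.

Lemma good_graph_no_tight_path : ~~ contains_tight_path k.+2 good_graph.
Proof.
apply/negP => /contains_tight_pathP [g /good_graph_labels_increase /(_ k (leqnn k))].
by rewrite leqNgt ltn_ord.
Qed.

End GoodTriples.

Lemma good_triples_le_ex_path n k (phi : {ffun 'I_n * 'I_n -> 'I_k}) :
  good_triples phi <= ex_path n k.+2.
Proof.
rewrite -card_good_graph.
apply: (@leq_bigmax_cond _ (fun G => uniform3 G && ~~ contains_tight_path k.+2 G)).
by rewrite good_graph_uniform good_graph_no_tight_path.
Qed.

Section LongestTightPath.
Variables (n : nat) (G : {set {set 'I_n}}).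
Implicit Types u v w : 'I_n.

(* [depth fuel u v] is the number of edges of a longest tight path ending with
   u < v as soon as u < fuel; the fuel only ensures termination. *)
Fixpoint depth (fuel : nat) (u v : 'I_n) : nat :=
  if fuel is fuel'.+1 then
    \max_(w : 'I_n | (w < u) && ([set w; u; v] \in G)) (depth fuel' w u).+1
  else 0.

Lemma depth_fuel fuel fuel' u v :
  u < fuel -> fuel <= fuel' -> depth fuel u v = depth fuel' u v.
Proof.
have step f u' v' : u' < f -> depth f u' v' = depth f.+1 u' v'.
  elim: f u' v' => [//|f IHf] u' v' lt_u /=.
  by apply: eq_bigr => w /andP [lt_wu _]; rewrite IHf //; lia.
move=> lt_u /subnK <-; elim: (fuel' - fuel) => [//|d IH].
by rewrite addSn -step //; lia.
Qed.

Lemma depth_edge u v w : u < v -> [set u; v; w] \in G -> depth n u v < depth n v w.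
Proof.
move=> lt_uv e_uvw.
rewrite -(@depth_fuel v.+1 n v w) // -(@depth_fuel v n u v) //; last exact: ltnW.
by apply: (leq_bigmax_cond (F := fun x => (depth v x v).+1)); rewrite lt_uv e_uvw.
Qed.

Lemma depth_tight_path fuel m u v : u < v -> m <= depth fuel u v ->
  exists g, [/\ tight_path G m g, g m = u & g m.+1 = v].
Proof.
elim: fuel m u v => [|fuel IH] [|m] u v lt_uv // le_m.
1,2: by exists (fun i => if i == 0 then u else v); split => //; exact: tight_path_pair.
have [w /andP [lt_wu e_wuv] le_m'] :
    exists2 w : 'I_n, (w < u) && ([set w; u; v] \in G) & m <= depth fuel w u.
  apply/exists_inP; move: le_m; apply: contraLR => /exists_inPn no_w.
  by rewrite -ltnNge ltnS; apply/bigmax_leqP => x /no_w; rewrite -ltnNge.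
have [g [g_path g_m g_m1]] := IH m w u lt_wu le_m'.
exists (fun i => if i <= m.+1 then g i else v); split.
- by apply: tight_path_rcons; rewrite ?g_m ?g_m1.
- by rewrite leqnn g_m1.
- by rewrite ltnn.
Qed.

End LongestTightPath.

Lemma card_le_f_lab n k (G : {set {set 'I_n}}) :
  uniform3 G -> ~~ contains_tight_path k.+3 G -> #|G| <= f_lab n k.+1.
Proof.
move=> G3 no_path.
have depth_lt (u v : 'I_n) : u < v -> depth G n u v < k.+1.
  move=> lt_uv; rewrite ltnS leqNgt; apply: contraNN no_path => /(depth_tight_path lt_uv).
  by case=> g [g_path _ _]; apply/contains_tight_pathP; exists g.
pose phi : {ffun 'I_n * 'I_n -> 'I_k.+1} := [ffun p => inord (depth G n p.1 p.2)].
apply: leq_trans (leq_bigmax phi); rewrite -card_good_graph; apply: subset_leq_card.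
apply/subsetP => e e_G; have /set3_sorted [a [b [c [ab bc e_abc]]]] : #|e| = 3.
  by apply/eqP; move/forall_inP: G3; apply.
apply/imsetP; exists (a, b, c) => //.
rewrite inE /= ab bc !ffunE /= !inordK ?depth_lt //.
by apply: depth_edge; rewrite // -e_abc.
Qed.

Theorem proposition4p1 (s n : nat) : 3 <= s -> ex_path n s = f_lab n (s - 2).
Proof.
case: s => [|[|[|k]]] // _; rewrite subSS subSS subn0.
apply/eqP; rewrite eqn_leq; apply/andP; split.
- by apply/bigmax_leqP => G /andP [G3 no_path]; apply: card_le_f_lab.
- by apply/bigmax_leqP => phi _; apply: good_triples_le_ex_path.
Qed.
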